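(* Let $X$ be a finitely supported subset of an invariant set $Z$. (1) If $X$ is FSM Dedekind infinite, then $X$ is FSM Mostowski infinite. (2) If $X$ is FSM Mostowski infinite, then $X$ is FSM Tarski II infinite. The converse of (2) fails: $\wp_{fin}(A)$ is FSM Tarski II infinite but not FSM Mostowski infinite.
   Context: Framework (FSM). Work in ZF with a fixed infinite set $A$ of atoms; $S_A$ is the group of bijections of $A$ fixing all but finitely many atoms; $Fix(S)$ is the set of $\pi\in S_A$ fixing each element of $S\subseteq A$; $S$ supports $x$ if $\pi\cdot x=x$ for all $\pi\in Fix(S)$. An invariant set is an $S_A$-set all of whose elements have finite supports; subsets carry $\pi\star W=\{\pi\cdot w:w\in W\}$; relations on $Z$ are subsets of $Z\times Z$ with the componentwise action. $\wp_{fin}(A)$ is the set of finite subsets of $A$. A function is finitely supported if there is a finite $S$ such that for $\pi\in Fix(S)$, $\pi$ preserves domain and codomain and $f(\pi\cdot x)=\pi\cdot f(x)$. Definitions: $X$ is FSM Dedekind infinite if there is a finitely supported injection from $X$ onto a finitely supported proper subset of $X$. $X$ is FSM Mostowski infinite if there exist an infinite finitely supported subset $Y\subseteq X$ and a total order on $Y$ that is finitely supported as a subset of $Z\times Z$. $X$ is FSM Tarski II infinite if there is a nonempty finitely supported family of finitely supported subsets of $X$ that is totally ordered by inclusion and has no maximal element. *)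

From mathcomp Require Import all_boot.
From Stdlib Require List.

Set Implicit Arguments.
Unset Strict Implicit.
Unset Printing Implicit Defensive.

(* Atoms: an eqType A (decidable equality, as in ZF classically).
   Infinitude of A is a hypothesis of the main theorem. *)
Definition atoms_infinite (A : eqType) : Prop :=
  forall s : seq A, exists a, a \notin s.

Record fperm (A : eqType) := FPerm {
  fp_fun : A -> A;
  fp_inv : A -> A;
  fp_funK : cancel fp_fun fp_inv;
  fp_invK : cancel fp_inv fp_fun;
  fp_finsupp : exists s : seq A, forall a, a \notin s -> fp_fun a = a
}.

Definition fixes (A : eqType) (pi : fperm A) (S : seq A) : Prop :=
  forall a, a \in S -> fp_fun pi a = a.

(* act is an action of S_A on T (stated pointwise on the underlying maps). *)
Definition is_action (A : eqType) (T : Type) (act : fperm A -> T -> T) : Prop :=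
  (forall pi, (forall a, fp_fun pi a = a) -> forall x, act pi x = x) /\
  (forall pi sigma tau,
      (forall a, fp_fun tau a = fp_fun pi (fp_fun sigma a)) ->
      forall x, act tau x = act pi (act sigma x)).

Definition supports (A : eqType) (T : Type) (act : fperm A -> T -> T)
  (S : seq A) (x : T) : Prop :=
  forall pi, fixes pi S -> act pi x = x.

Definition finsupp (A : eqType) (T : Type) (act : fperm A -> T -> T) (x : T) : Prop :=
  exists S : seq A, supports act S x.

Definition invariant_set (A : eqType) (T : Type) (act : fperm A -> T -> T) : Prop :=
  is_action act /\ forall x, finsupp act x.

Definition setact (A : eqType) (T : Type) (act : fperm A -> T -> T)
  (pi : fperm A) (W : T -> Prop) : T -> Prop :=
  fun t => exists w, W w /\ act pi w = t.

Definition prodact (A : eqType) (T : Type) (act : fperm A -> T -> T)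
  (pi : fperm A) (p : T * T) : T * T := (act pi p.1, act pi p.2).

Definition fs_fun (A : eqType) (T : Type) (act : fperm A -> T -> T)
  (D C : T -> Prop) (f : T -> T) : Prop :=
  exists S : seq A, forall pi, fixes pi S ->
    setact act pi D = D /\ setact act pi C = C /\
    forall x, D x -> f (act pi x) = act pi (f x).

Definition infinite_set (T : Type) (Y : T -> Prop) : Prop :=
  ~ exists l : list T, forall y, Y y -> List.In y l.

Definition total_order_on (T : Type) (Y : T -> Prop) (R : T * T -> Prop) : Prop :=
  (forall p, R p -> Y p.1 /\ Y p.2) /\
  (forall x, Y x -> R (x, x)) /\
  (forall x y, R (x, y) -> R (y, x) -> x = y) /\
  (forall x y z, R (x, y) -> R (y, z) -> R (x, z)) /\
  (forall x y, Y x -> Y y -> R (x, y) \/ R (y, x)).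

Definition subset (T : Type) (U V : T -> Prop) : Prop := forall x, U x -> V x.

Definition FSM_Dedekind_infinite (A : eqType) (T : Type)
  (act : fperm A -> T -> T) (X : T -> Prop) : Prop :=
  exists (f : T -> T) (Y : T -> Prop),
    finsupp (setact act) Y /\ subset Y X /\ (exists x, X x /\ ~ Y x) /\
    (forall x, X x -> Y (f x)) /\
    (forall x x', X x -> X x' -> f x = f x' -> x = x') /\
    (forall y, Y y -> exists x, X x /\ f x = y) /\
    fs_fun act X Y f.

Definition FSM_Mostowski_infinite (A : eqType) (T : Type)
  (act : fperm A -> T -> T) (X : T -> Prop) : Prop :=
  exists (Y : T -> Prop) (R : T * T -> Prop),
    subset Y X /\ infinite_set Y /\ finsupp (setact act) Y /\
    total_order_on Y R /\ finsupp (setact (prodact act)) R.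

Definition FSM_TarskiII_infinite (A : eqType) (T : Type)
  (act : fperm A -> T -> T) (X : T -> Prop) : Prop :=
  exists F : (T -> Prop) -> Prop,
    (exists W, F W) /\
    finsupp (setact (setact act)) F /\
    (forall W, F W -> subset W X /\ finsupp (setact act) W) /\
    (forall W V, F W -> F V -> subset W V \/ subset V W) /\
    (forall W, F W -> exists V, F V /\ subset W V /\ ~ subset V W).

Definition finite_pred (A : eqType) (P : A -> Prop) : Prop :=
  exists s : seq A, forall a, P a -> a \in s.

Definition pfin (A : eqType) : Type := {P : A -> Prop | finite_pred P}.

Definition atomact (A : eqType) (pi : fperm A) (a : A) : A := fp_fun pi a.

Lemma setact_finite (A : eqType) (pi : fperm A) (P : A -> Prop) :
  finite_pred P -> finite_pred (setact (@atomact A) pi P).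
Proof.
move=> [s Hs]; exists (map (fp_fun pi) s) => b [a [Pa <-]].
by apply: map_f; apply: Hs.
Qed.

Definition pfin_act (A : eqType) (pi : fperm A) (P : pfin A) : pfin A :=
  exist _ (setact (@atomact A) pi (proj1_sig P)) (setact_finite pi (proj2_sig P)).

Definition setT_of (T : Type) : T -> Prop := fun _ => True.

(* The key fact is that a finitely supported total order is rigid. If pi fixes
   Y and R setwise and pi^k fixes a support of y, then y, pi y, ..., pi^k y = y
   is a monotone cycle in a total order, hence constant: one finite set supports
   every element of Y.
   Dedekind infinity (via the orbit of a point outside the image) and Mostowski
   infinity (via rigidity) thus both give an injective sequence in X whose terms
   share a finite support; indexing it gives a Mostowski order, its initial
   segments a Tarski II chain.
   In pfin A the sets of at most n atoms form an equivariant chain without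
   maximum. A Mostowski Y in pfin A would be uniformly supported by some finite
   S; swapping an atom outside S with a fresh atom shows that each member of Y
   lies inside S, so Y is finite. *)

From mathcomp Require Import all_boot.
(* After all_boot, so that the [subset] of Defs shadows the one of fintype. *)
From Pilot Require Import Defs.
From mathcomp Require Import zify.
From Stdlib Require Import Classical ClassicalEpsilon FunctionalExtensionality PropExtensionality.
From Stdlib Require List.

Set Implicit Arguments.
Unset Strict Implicit.
Unset Printing Implicit Defensive.

Lemma iter_can (T : Type) (f g : T -> T) n : cancel f g -> cancel (iter n f) (iter n g).
Proof. by move=> fK; elim: n => [|n IH] x //; rewrite iterSr iterS fK IH. Qed.

Lemma iter_inj (T : Type) (f : T -> T) n : injective f -> injective (iter n f).
Proof. by move=> finj; elim: n => [|n IH] x y //= /finj; apply: IH. Qed.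

Lemma iter_period (T : eqType) (f : T -> T) (x : T) (s : seq T) :
  injective f -> (forall n, iter n f x \in s) -> exists2 k, 0 < k & iter k f x = x.
Proof.
move=> finj orbit_s; pose orbit := [seq iter i f x | i <- iota 0 (size s).+1].
have /uniqPn : ~~ uniq orbit.
  apply/negP => /uniq_leq_size orbit_le.
  have /orbit_le : {subset orbit <= s} by move=> _ /mapP[i _ ->].
  by rewrite size_map size_iota ltnn.
move=> /(_ x)[i [j [ij]]]; rewrite size_map size_iota => js.
rewrite !(nth_map 0) ?size_iota 1?(ltn_trans ij) // !nth_iota ?(ltn_trans ij) // !add0n.
rewrite -(subnKC (ltnW ij)) iterD => /(iter_inj finj)/esym eq_x.
by exists (j - i); rewrite ?subn_gt0.
Qed.

Section Permutations.

Variable A : eqType.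
Implicit Types (pi : fperm A) (S : seq A).

Lemma fp_inj pi : injective (fp_fun pi).
Proof. exact: can_inj (@fp_funK _ pi). Qed.

Lemma fixes_cat pi S1 S2 : fixes pi (S1 ++ S2) -> fixes pi S1 /\ fixes pi S2.
Proof. by move=> Hpi; split=> a Ha; apply: Hpi; rewrite mem_cat Ha ?orbT. Qed.

Definition fperm_id : fperm A :=
  @FPerm A id id (frefl _) (frefl _) (ex_intro _ [::] (fun _ _ => erefl)).

Lemma fperm_inv_supp pi : exists s : seq A, forall a, a \notin s -> fp_inv pi a = a.
Proof.
have [s Hs] := fp_finsupp pi; exists s => a Ha.
by rewrite -{1}(Hs a Ha) fp_funK.
Qed.

Definition fperm_inv pi : fperm A :=
  FPerm (@fp_invK _ pi) (@fp_funK _ pi) (fperm_inv_supp pi).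

Lemma fperm_iter_supp pi n :
  exists s : seq A, forall a, a \notin s -> iter n (fp_fun pi) a = a.
Proof.
have [s Hs] := fp_finsupp pi; exists s => a Ha.
by elim: n => //= n ->; apply: Hs.
Qed.

Definition fperm_iter pi n : fperm A :=
  FPerm (iter_can n (@fp_funK _ pi)) (iter_can n (@fp_invK _ pi)) (fperm_iter_supp pi n).

Lemma fperm_orbit_finite pi (a : A) :
  exists s : seq A, forall n, iter n (fp_fun pi) a \in s.
Proof.
have [s Hs] := fp_finsupp pi; exists (a :: s).
have stable x : x \in a :: s -> fp_fun pi x \in a :: s.
  have [xs _|xNs] := boolP (x \in s); last by rewrite (Hs x xNs).
  apply: contraT; rewrite inE negb_or => /andP[_ pixNs].
  by move: (Hs _ pixNs) => /fp_inj eq_x; rewrite eq_x xs in pixNs.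
by elim=> [|n IH]; rewrite ?mem_head // iterS stable.
Qed.

Lemma fperm_period pi (l : seq A) :
  exists2 k, 0 < k & forall a, a \in l -> iter k (fp_fun pi) a = a.
Proof.
have iter_mul (x : A) p m : iter p (fp_fun pi) x = x -> iter (m * p) (fp_fun pi) x = x.
  by move=> px; elim: m => // m IH; rewrite mulSn iterD IH px.
elim: l => [|a l [k k_gt0 Hk]]; first by exists 1.
have [s Hs] := fperm_orbit_finite pi a.
have [ka ka_gt0 Hka] := iter_period (@fp_inj pi) Hs.
exists (ka * k); first by rewrite muln_gt0 ka_gt0.
move=> x; rewrite inE => /orP[/eqP -> | xl]; first by rewrite mulnC iter_mul.
by rewrite iter_mul // Hk.
Qed.

End Permutations.

Lemma act_fperm_id (A : eqType) T (act : fperm A -> T -> T) x :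
  is_action act -> act (fperm_id A) x = x.
Proof. by move=> [act_id _]; apply: act_id. Qed.

Lemma act_fperm_invK (A : eqType) T (act : fperm A -> T -> T) pi :
  is_action act -> cancel (act (fperm_inv pi)) (act pi).
Proof.
move=> Hact x; rewrite -[RHS](act_fperm_id x Hact).
by symmetry; apply: Hact.2 => a /=; rewrite fp_invK.
Qed.

Lemma act_fperm_iter (A : eqType) T (act : fperm A -> T -> T) pi n x :
  is_action act -> act (fperm_iter pi n) x = iter n (act pi) x.
Proof.
move=> Hact; elim: n x => [|n IH] x; first exact: Hact.1.
by rewrite iterS -IH; apply: Hact.2.
Qed.

Lemma setact_fixed (A : eqType) T (act : fperm A -> T -> T) pi (W : T -> Prop) :
  (forall w, W w -> act pi w = w) -> setact act pi W = W.
Proof.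
move=> Hfix; apply: functional_extensionality => t; apply: propositional_extensionality.
split=> [[w [Ww <-]]|Wt]; first by rewrite Hfix.
by exists t; rewrite Hfix.
Qed.

Lemma setact_equivariant (A : eqType) T (act : fperm A -> T -> T) pi (W : T -> Prop) :
  is_action act -> (forall sigma w, W w -> W (act sigma w)) -> setact act pi W = W.
Proof.
move=> Hact Wact; apply: functional_extensionality => t; apply: propositional_extensionality.
split=> [[w [Ww <-]]|Wt]; first exact: Wact.
by exists (act (fperm_inv pi) t); split; [exact: Wact | exact: act_fperm_invK].
Qed.

Lemma monotone_cycle_fixed (T : Type) (r : T -> T -> Prop) (f : T -> T) (y : T) k :
  (forall u v, r u v -> r (f u) (f v)) -> (forall u v w, r u v -> r v w -> r u w) ->
  (forall u v, r u v -> r v u -> u = v) ->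
  0 < k -> iter k f y = y -> r y y -> r y (f y) -> f y = y.
Proof.
move=> f_mono r_trans r_anti k_gt0 period r_yy r_yfy; apply: r_anti => //.
have r_y_orbit n : r y (iter n f y).
  by elim: n => //= n IH; apply: r_trans r_yfy (f_mono _ _ IH).
by rewrite -{2}period -(prednK k_gt0) iterS; apply: f_mono.
Qed.

Lemma total_order_fixed (A : eqType) T (act : fperm A -> T -> T) (Y : T -> Prop)
    (R : T * T -> Prop) pi y :
  is_action act -> setact act pi Y = Y -> setact (prodact act) pi R = R ->
  total_order_on Y R -> Y y -> finsupp act y -> act pi y = y.
Proof.
move=> Hact piY piR [RY [R_refl [R_anti [R_trans R_total]]]] Yy [Sy HSy].
have [k k_gt0 Hk] := fperm_period pi Sy.
have period : iter k (act pi) y = y.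
  by rewrite -act_fperm_iter //; apply: HSy => a /Hk.
have R_mono u v : R (u, v) -> R (act pi u, act pi v).
  by move=> Ruv; rewrite -piR; exists (u, v).
have Y_pi : Y (act pi y) by rewrite -piY; exists y.
have [Ry_piy|Rpiy_y] := R_total _ _ Yy Y_pi.
  apply: (@monotone_cycle_fixed _ (fun u v => R (u, v)) (act pi) y k) => //.
  exact: R_refl.
apply: (@monotone_cycle_fixed _ (fun u v => R (v, u)) (act pi) y k) => //.
- by move=> u v; apply: R_mono.
- by move=> u v w Rvu Rwv; apply: R_trans Rwv Rvu.
- by move=> u v Rvu Ruv; apply: R_anti.
- exact: R_refl.
Qed.

Lemma total_order_uniform_support (A : eqType) T (act : fperm A -> T -> T) (Y : T -> Prop)
    (R : T * T -> Prop) :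
  is_action act -> (forall y, Y y -> finsupp act y) ->
  finsupp (setact act) Y -> total_order_on Y R -> finsupp (setact (prodact act)) R ->
  exists S : seq A, forall pi, fixes pi S -> forall y, Y y -> act pi y = y.
Proof.
move=> Hact Yfs [SY HSY] Hord [SR HSR]; exists (SY ++ SR) => pi /fixes_cat[piSY piSR] y Yy.
exact: total_order_fixed Hact (HSY pi piSY) (HSR pi piSR) Hord Yy (Yfs y Yy).
Qed.

Lemma injective_seq_escapes (T : Type) (g : nat -> T) :
  injective g -> forall l : list T, exists n, ~ List.In (g n) l.
Proof.
move=> + l; elim: l g => [|a l IH] g g_inj; first by exists 0.
case: (classic (exists n, g n = a)) => [[n0 g_n0]|a_notin_g].
  have [|k Hk] := IH (fun n => g (n + n0.+1)); first by move=> n m /g_inj; lia.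
  exists (k + n0.+1) => /= [[a_eq|//]].
  by move: a_eq; rewrite -g_n0 => /g_inj; lia.
have [k Hk] := IH g g_inj; exists k => /= [[a_eq|//]].
by apply: a_notin_g; exists k.
Qed.

Lemma infinite_injective_seq (T : Type) (Y : T -> Prop) :
  infinite_set Y -> exists g : nat -> T, injective g /\ forall n, Y (g n).
Proof.
move=> Yinf; have next (l : list T) : {y | Y y /\ ~ List.In y l}.
  apply: constructive_indefinite_description; apply: NNPP => no_y.
  apply: Yinf; exists l => y Yy; apply: NNPP => y_notin; apply: no_y; by exists y.
pose prefix n := iter n (fun l => sval (next l) :: l) [::].
pose g n := sval (next (prefix n)).
have g_prefix m n : m < n -> List.In (g m) (prefix n).
  elim: n => [|n IH] //; rewrite ltnS leq_eqVlt => /orP[/eqP -> | /IH]; [by left | by right].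
exists g; split=> [m n g_mn|n]; last exact: (proj1 (svalP (next (prefix n)))).
have g_fresh k : ~ List.In (g k) (prefix k) := proj2 (svalP (next (prefix k))).
by case: (ltngtP m n) => // [/g_prefix|/g_prefix]; [rewrite g_mn|rewrite -g_mn] => /g_fresh.
Qed.

Definition has_fs_sequence (A : eqType) T (act : fperm A -> T -> T) (X : T -> Prop) :=
  exists g : nat -> T, [/\ injective g, forall n, X (g n) &
    exists S : seq A, forall pi, fixes pi S -> forall n, act pi (g n) = g n].

Section FiniteSupportHierarchy.

Variables (A : eqType) (T : Type) (act : fperm A -> T -> T) (X : T -> Prop).

Lemma dedekind_fs_sequence :
  invariant_set act -> FSM_Dedekind_infinite act X -> has_fs_sequence act X.
Proof.
move=> [_ fs_act] [f [Y [_ [YX [[x0 [Xx0 x0_notin_Y]] [fXY [f_inj [_ [Sf HSf]]]]]]]]].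
pose orbit n := iter n f x0.
have orbit_X n : X (orbit n) by elim: n => //= n IH; apply/YX/fXY.
have orbit_inj : injective orbit.
  elim=> [|n IH] [|m] //= eq_nm.
  - by case: x0_notin_Y; rewrite eq_nm; apply: fXY.
  - by case: x0_notin_Y; rewrite -eq_nm; apply: fXY.
  - by rewrite (IH m (f_inj _ _ (orbit_X n) (orbit_X m) eq_nm)).
have [S0 HS0] := fs_act x0.
exists orbit; split=> //; exists (Sf ++ S0) => pi /fixes_cat[piSf piS0].
have [_ [_ f_equi]] := HSf pi piSf.
by elim=> [|n IH]; [apply: HS0 | rewrite /= -f_equi ?IH].
Qed.

Lemma fs_sequence_mostowski : has_fs_sequence act X -> FSM_Mostowski_infinite act X.
Proof.
move=> [g [g_inj gX [S HS]]].
exists (fun t => exists n, t = g n), (fun p => exists n m, n <= m /\ p = (g n, g m)).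
split; first by move=> _ [n ->].
split.
  move=> [l Hl]; have [n] := injective_seq_escapes g_inj l.
  by apply; apply: Hl; exists n.
split; first by exists S => pi piS; apply: setact_fixed => _ [n ->]; apply: HS.
split; last first.
  by exists S => pi piS; apply: setact_fixed => _ [n [m [_ ->]]]; rewrite /prodact /= !HS.
split; first by move=> _ [n [m [_ ->]]]; split; [exists n | exists m].
split; first by move=> _ [n ->]; exists n, n.
split.
  move=> _ _ [n [m [le_nm [-> ->]]]] [m' [n' [le_mn' [/g_inj eq_m /g_inj eq_n]]]].
  by congr g; apply/anti_leq; rewrite le_nm eq_m eq_n le_mn'.
split.
  move=> _ _ _ [n [m [le_nm [-> ->]]]] [m' [k [le_mk [/g_inj eq_m ->]]]].
  by exists n, k; split=> //; apply: leq_trans le_nm _; rewrite eq_m.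
move=> _ _ [n ->] [m ->]; case: (leqP n m) => [le_nm|/ltnW le_mn].
  by left; exists n, m.
by right; exists m, n.
Qed.

Lemma mostowski_fs_sequence :
  invariant_set act -> FSM_Mostowski_infinite act X -> has_fs_sequence act X.
Proof.
move=> [Hact fs_act] [Y [R [YX [Yinf [fsY [Hord fsR]]]]]].
have [S HS] := total_order_uniform_support Hact (fun y _ => fs_act y) fsY Hord fsR.
have [g [g_inj gY]] := infinite_injective_seq Yinf.
by exists g; split=> //; [move=> n; apply/YX/gY | exists S => pi piS n; apply: HS].
Qed.

Lemma increasing_chain_tarski (W : nat -> T -> Prop) (S : seq A) :
  (forall n, subset (W n) X) -> (forall m n, m <= n -> subset (W m) (W n)) ->
  (forall n, ~ subset (W n.+1) (W n)) ->
  (forall pi, fixes pi S -> forall n, setact act pi (W n) = W n) ->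
  FSM_TarskiII_infinite act X.
Proof.
move=> WX W_mono W_strict HS; exists (fun V => exists n, V = W n).
split; first by exists (W 0), 0.
split; first by exists S => pi piS; apply: setact_fixed => _ [n ->]; apply: HS.
split; first by move=> _ [n ->]; split; [apply: WX | exists S => pi piS; apply: HS].
split.
  move=> _ _ [n ->] [m ->]; case: (leqP n m) => [le_nm|/ltnW le_mn].
    by left; apply: W_mono.
  by right; apply: W_mono.
move=> _ [n ->]; exists (W n.+1); split; first by exists n.+1.
by split; [apply: W_mono | apply: W_strict].
Qed.

Lemma fs_sequence_tarski : has_fs_sequence act X -> FSM_TarskiII_infinite act X.
Proof.
move=> [g [g_inj gX [S HS]]].
apply: (@increasing_chain_tarski (fun n t => exists2 k, k < n & t = g k) S).
- by move=> n _ [k _ ->].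
- by move=> m n le_mn _ [k lt_km ->]; exists k => //; apply: leq_trans le_mn.
- move=> n /(_ (g n) (ex_intro2 _ _ n (ltnSn n) erefl))[k].
  by move=> lt_kn /g_inj eq_nk; rewrite eq_nk ltnn in lt_kn.
- by move=> pi piS n; apply: setact_fixed => _ [k _ ->]; apply: HS.
Qed.

End FiniteSupportHierarchy.

Section FiniteSetsOfAtoms.

Variable A : eqType.
Hypothesis A_inf : atoms_infinite A.

Lemma pfin_eq (P Q : pfin A) : (forall a, proj1_sig P a <-> proj1_sig Q a) -> P = Q.
Proof.
case: P Q => [P finP] [Q finQ] /= PQ.
have eqPQ : P = Q.
  by apply: functional_extensionality => a; apply: propositional_extensionality.
by subst Q; f_equal; apply: proof_irrelevance.
Qed.

Definition pfin_of_seq (s : seq A) : pfin A :=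
  exist (@finite_pred A) (fun a => is_true (a \in s)) (ex_intro _ s (fun _ sa => sa)).

Lemma pfin_action : is_action (@pfin_act A).
Proof.
split=> [pi pi_id P|pi sigma tau tau_comp P]; apply: pfin_eq => a /=.
  by split=> [[w [Pw <-]]|Pa]; [rewrite /atomact pi_id | exists a; rewrite /atomact pi_id].
split=> [[w [Pw <-]]|[_ [[w [Pw <-]] <-]]]; last by exists w; rewrite /atomact tau_comp.
by exists (atomact sigma w); split; [exists w | rewrite /atomact tau_comp].
Qed.

Lemma pfin_finsupp (P : pfin A) : finsupp (@pfin_act A) P.
Proof.
case: P => [P [s Ps]]; exists s => pi pi_s; apply: pfin_eq => a /=.
by split=> [[w [Pw <-]]|Pa]; [rewrite /atomact pi_s ?Ps | exists a; rewrite /atomact pi_s ?Ps].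
Qed.

Definition pfin_card_le n (P : pfin A) :=
  exists2 s : seq A, size s <= n & forall a, proj1_sig P a -> a \in s.

Lemma pfin_card_le_act n pi P : pfin_card_le n P -> pfin_card_le n (pfin_act pi P).
Proof.
move=> [s size_s Ps]; exists (map (fp_fun pi) s); first by rewrite size_map.
by move=> _ [a [Pa <-]]; apply/map_f/Ps.
Qed.

Lemma uniq_seq_of_size n : exists2 s : seq A, uniq s & size s = n.
Proof.
elim: n => [|n [s s_uniq size_s]]; first by exists [::].
by have [a a_notin_s] := A_inf s; exists (a :: s); rewrite /= ?a_notin_s ?size_s.
Qed.

Lemma pfin_tarski : FSM_TarskiII_infinite (@pfin_act A) (@setT_of (pfin A)).
Proof.
apply: (@increasing_chain_tarski _ _ _ _ pfin_card_le [::]) => //.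
- by move=> m n le_mn P [s size_s Ps]; exists s => //; apply: leq_trans le_mn.
- move=> n; have [s s_uniq size_s] := uniq_seq_of_size n.+1.
  move=> /(_ (pfin_of_seq s))[|t size_t st]; first by exists s; rewrite ?size_s.
  by have := uniq_leq_size s_uniq st; rewrite size_s leqNgt ltnS size_t.
- move=> pi _ n; apply: setact_equivariant pfin_action _ => sigma P.
  exact: pfin_card_le_act.
Qed.

Definition swap_atoms (a b x : A) := if x == a then b else if x == b then a else x.

Lemma swap_atomsK (a b : A) : involutive (swap_atoms a b).
Proof.
move=> x; rewrite /swap_atoms.
have [->|xa] := eqVneq x a; first by rewrite eqxx; case: eqVneq.
have [->|xb] := eqVneq x b; first by rewrite eqxx.
by rewrite (negbTE xa) (negbTE xb).
Qed.

Lemma swap_atoms_supp (a b : A) :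
  exists s : seq A, forall x, x \notin s -> swap_atoms a b x = x.
Proof.
exists [:: a; b] => x; rewrite !inE negb_or => /andP[xa xb].
by rewrite /swap_atoms (negbTE xa) (negbTE xb).
Qed.

Definition fperm_swap (a b : A) : fperm A :=
  FPerm (swap_atomsK a b) (swap_atomsK a b) (swap_atoms_supp a b).

Lemma pfin_supported_sub (S : seq A) (P : pfin A) :
  (forall pi, fixes pi S -> pfin_act pi P = P) -> forall a, proj1_sig P a -> a \in S.
Proof.
move=> HS a Pa; apply: contraT => a_notin_S.
have [sP HsP] := proj2_sig P.
have [b] := A_inf (a :: S ++ sP).
rewrite inE mem_cat negb_or => /andP[ba /norP[b_notin_S b_notin_sP]].
have swap_fixes : fixes (fperm_swap a b) S.
  move=> x xS /=; rewrite /swap_atoms.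
  have [xa|_] := eqVneq x a; first by rewrite -xa xS in a_notin_S.
  by have [xb|//] := eqVneq x b; rewrite -xb xS in b_notin_S.
suff /HsP : proj1_sig P b by rewrite (negbTE b_notin_sP).
rewrite -(HS _ swap_fixes) /=; exists a; split=> //.
by rewrite /atomact /= /swap_atoms eqxx.
Qed.

Lemma subsets_of_seq (S : seq A) :
  exists L : seq (seq A), forall P : A -> Prop, (forall a, P a -> a \in S) ->
    exists2 s, s \in L & forall a, P a <-> a \in s.
Proof.
exists [seq mask t S | t : (size S).-tuple bool] => P PS.
pose p a := if excluded_middle_informative (P a) then true else false.
have p_P a : p a <-> P a by rewrite /p; case: excluded_middle_informative.
exists (filter p S).
  by rewrite filter_mask -[map p S]/(tval (map_tuple p (in_tuple S))); apply: image_f.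
by move=> a; rewrite mem_filter; split=> [Pa|/andP[/p_P]//]; rewrite PS // andbT; apply/p_P.
Qed.

Lemma pfin_not_mostowski : ~ FSM_Mostowski_infinite (@pfin_act A) (@setT_of (pfin A)).
Proof.
move=> [Y [R [_ [Yinf [fsY [Hord fsR]]]]]].
have [S HS] :=
  total_order_uniform_support pfin_action (fun P _ => pfin_finsupp P) fsY Hord fsR.
have [L HL] := subsets_of_seq S.
apply: Yinf; exists (map pfin_of_seq L) => P YP.
have [s sL Ps] := HL _ (pfin_supported_sub (fun pi piS => HS pi piS P YP)).
have -> : P = pfin_of_seq s by apply: pfin_eq.
by elim: L sL {HL} => //= s' L IH; rewrite inE => /orP[/eqP <-|/IH]; [left | right].
Qed.

End FiniteSetsOfAtoms.

Theorem mainTheorem15 (A : eqType) (A_inf : atoms_infinite A) :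
  (forall (Z : Type) (act : fperm A -> Z -> Z) (X : Z -> Prop),
      invariant_set act -> finsupp (setact act) X ->
      (FSM_Dedekind_infinite act X -> FSM_Mostowski_infinite act X) /\
      (FSM_Mostowski_infinite act X -> FSM_TarskiII_infinite act X)) /\
  (FSM_TarskiII_infinite (@pfin_act A) (@setT_of (pfin A)) /\
   ~ FSM_Mostowski_infinite (@pfin_act A) (@setT_of (pfin A))).
Proof.
split=> [Z act X act_inv _|]; last by split; [apply: pfin_tarski | apply: pfin_not_mostowski].
split=> [/(dedekind_fs_sequence act_inv)|/(mostowski_fs_sequence act_inv)].
  exact: fs_sequence_mostowski.
exact: fs_sequence_tarski.
Qed.
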